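(* Let $\Sigma_A$, $\pi$, $\Pi$ be as in the context and let $\lambda$ be a symmetric Markov measure on $\Sigma_A$. If $B\subset\Sigma_A\times I$ is a bony graph relative to $\lambda$, then $\Pi(B)$ is a bi-bony graph relative to $\pi_*\lambda$. Moreover, if $B$ is continuous, then so is $\Pi(B)$.
   Context: $I=[0,1]$, $R(x)=1-x$. Given $C^1$-diffeomorphisms onto their images $f_1,\ldots,f_N$ of $I$, let $\mathcal I_P$ / $\mathcal I_R$ be the indices of orientation preserving / reversing $f_i$. $A=(a_{ij})_{i,j=1}^{2N}$ with $a_{ij}=1$ if ($i\in\mathcal I_P$, $j\le N$), or ($i\in\mathcal I_R$, $j>N$), or ($i-N\in\mathcal I_P$, $j>N$), or ($i-N\in\mathcal I_R$, $j\le N$), else $0$; $\Sigma_A$ the $A$-admissible sequences in $\{1,\ldots,2N\}^{\mathbb Z}$; $\pi\colon\Sigma_A\to\Sigma_N=\{1,\ldots,N\}^{\mathbb Z}$, $\pi(\omega)_n=\overline{\omega_n}$ ($\overline i=i$ for $i\le N$, $\overline i=i-N$ otherwise). $C=\{\omega\colon\omega_0\le N\}$; $\Pi(\omega,x)=(\pi(\omega),x)$ if $\omega\in C$, $(\pi(\omega),R(x))$ otherwise. A Markov measure on $\Sigma_A$ with probability vector $(p_i)$ and stochastic matrix $(P_{ij})$ is symmetric if $p_i=p_{i+N}$, $P_{ij}=P_{(i+N)(j+N)}$, $P_{i(j+N)}=P_{(i+N)j}$ for $i,j\le N$. For $\Sigma\in\{\Sigma_A,\Sigma_N\}$, $B\subset\Sigma\times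 I$ and $\xi\in\Sigma$, $B_\xi$ is the set of $x$ with $(\xi,x)\in B$. Relative to a Borel probability $\lambda$ on $\Sigma$, $B$ is a bony graph if $B_\xi$ is a single point for $\lambda$-a.e. $\xi$ and an interval at all remaining points; it is continuous if for every $\xi$ in the projection $\Pi_1(B)$ and $\varepsilon>0$ there is $\delta>0$ such that $\eta\in\Pi_1(B)$, $d(\eta,\xi)<\delta$ imply $B_\eta\subset U_\varepsilon(B_\xi)$. A (continuous) bi-bony graph is a union of two (continuous) bony graphs. *)

From HB Require Import structures.
From mathcomp Require Import all_boot all_order all_algebra.
From mathcomp Require Import all_classical all_reals all_analysis.
Set Implicit Arguments. Unset Strict Implicit. Unset Printing Implicit Defensive.
Import Order.TTheory GRing.Theory Num.Theory.
Local Open Scope classical_set_scope.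
Local Open Scope ring_scope.

(* Alphabet {1,...,2N} is encoded as 'I_(N+N) (0-based):               *)
(*   lshift N i  <-> symbol i+1       (i.e. symbols <= N)              *)
(*   rshift N i  <-> symbol N+i+1     (i.e. symbols >  N)              *)

(* "i <= N" in the paper's 1-based numbering *)
Definition isLo {N : nat} (i : 'I_(N + N)) : bool := (i < N)%N.

Definition bar {N : nat} (i : 'I_(N + N)) : 'I_N :=
  match fintype.split i with inl j => j | inr j => j end.

Definition orient_pres {R : realType} (g : R -> R) : Prop :=
  forall x y : R, 0 <= x -> x < y -> y <= 1 -> g x < g y.
Definition orient_rev {R : realType} (g : R -> R) : Prop :=
  forall x y : R, 0 <= x -> x < y -> y <= 1 -> g y < g x.

Definition adm {R : realType} {N : nat} (f : 'I_N -> R -> R)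
    (i j : 'I_(N + N)) : Prop :=
  [\/ [/\ isLo i, orient_pres (f (bar i)) & isLo j],
      [/\ isLo i, orient_rev (f (bar i)) & ~~ isLo j],
      [/\ ~~ isLo i, orient_pres (f (bar i)) & ~~ isLo j] |
      [/\ ~~ isLo i, orient_rev (f (bar i)) & isLo j]].

Definition SigmaA {R : realType} {N : nat} (f : 'I_N -> R -> R)
    : set (int -> 'I_(N + N)) :=
  [set w | forall k : int, adm f (w k) (w (k + 1))].

(* sequence spaces; the number of maps is n.+1 (i.e. N >= 1) *)
Definition seqA (n : nat) := int -> 'I_(n.+1 + n.+1).
Definition seqN (n : nat) := int -> 'I_n.+1.
HB.instance Definition _ n := Choice.on (seqA n).
HB.instance Definition _ n := isPointed.Build (seqA n) (fun _ => lshift _ ord0).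
HB.instance Definition _ n := Choice.on (seqN n).
HB.instance Definition _ n := isPointed.Build (seqN n) (fun _ => ord0).

Definition cylA (n : nat) : set (set (seqA n)) :=
  [set C | exists (k : int) (i : 'I_(n.+1 + n.+1)), C = [set w | w k = i]].
Definition cylN (n : nat) : set (set (seqN n)) :=
  [set C | exists (k : int) (i : 'I_n.+1), C = [set w | w k = i]].
Arguments cylA : clear implicits.
Arguments cylN : clear implicits.
Definition SA (n : nat) := g_sigma_algebraType (cylA n).
Definition SN (n : nat) := g_sigma_algebraType (cylN n).

Definition cylinder {K : Type} (m : int) (k : nat) (s : 'I_k.+1 -> K)
    : set (int -> K) :=
  [set w | forall j : 'I_k.+1, w (m + (j : nat)%:Z) = s j].

Definition mweight {R : realType} {K : finType} (p : K -> R) (P : K -> K -> R)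
    (k : nat) (s : 'I_k.+1 -> K) : R :=
  p (s ord0) * \prod_(j < k) P (s (widen_ord (leqnSn k) j)) (s (lift ord0 j)).

Definition markov_measure {R : realType} {n : nat} (f : 'I_n.+1 -> R -> R)
    (p : 'I_(n.+1 + n.+1) -> R) (P : 'I_(n.+1 + n.+1) -> 'I_(n.+1 + n.+1) -> R)
    (lam : set (SA n) -> \bar R) : Prop :=
  [/\ (forall i, 0 <= p i) /\ \sum_i p i = 1,
      (forall i j, 0 <= P i j) /\ (forall i, \sum_j P i j = 1),
      (forall i j, ~ adm f i j -> P i j = 0),
      (forall j, \sum_i p i * P i j = p j) &
      (forall (m : int) (k : nat) (s : 'I_k.+1 -> 'I_(n.+1 + n.+1)),
          lam (@cylinder _ m k s) = (mweight p P s)%:E)].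

Definition symmetric_markov {R : realType} {n : nat} (f : 'I_n.+1 -> R -> R)
    (p : 'I_(n.+1 + n.+1) -> R) (P : 'I_(n.+1 + n.+1) -> 'I_(n.+1 + n.+1) -> R)
    (lam : set (SA n) -> \bar R) : Prop :=
  markov_measure f p P lam /\
  forall i j : 'I_n.+1,
    [/\ p (lshift _ i) = p (rshift _ i),
        P (lshift _ i) (lshift _ j) = P (rshift _ i) (rshift _ j) &
        P (lshift _ i) (rshift _ j) = P (rshift _ i) (lshift _ j)].

Definition piA (n : nat) : SA n -> SN n := fun w k => bar (w k).
Arguments piA : clear implicits.
Definition PiMap {R : realType} (n : nat) (z : SA n * R) : SN n * R :=
  (piA n z.1, if isLo (z.1 0) then z.2 else 1 - z.2).

Definition fiber {T R : Type} (B : set (T * R)) (xi : T) : set R :=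
  [set x | B (xi, x)].

Definition Unbhd {R : realType} (eps : R) (S : set R) : set R :=
  [set x | exists2 y, S y & `|x - y| < eps].

(* d(x,y) = 2^{-min{|k| : x_k <> y_k}}  (and 0 if x = y) *)
Definition dseq {R : realType} {K : Type} (x y : int -> K) : R :=
  sup [set r : R | exists k : int, x k <> y k /\ r = (2^-1) ^+ `|k|%N].

Definition bony {R : realType} {d} {T : semiRingOfSetsType d}
    (S : set T) (mu : set T -> \bar R) (B : set (T * R)) : Prop :=
  [/\ B `<=` [set z | S z.1 /\ 0 <= z.2 <= 1],
      almost_everywhere mu (fun xi => S xi -> exists x, fiber B xi = [set x]) &
      forall xi, S xi -> is_interval (fiber B xi)].

Definition graph_continuous {R : realType} {K : Type}
    (B : set ((int -> K) * R)) : Prop :=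
  forall xi, (fst @` B) xi -> forall eps : R, 0 < eps ->
    exists2 delta : R, 0 < delta &
      forall eta, (fst @` B) eta -> dseq eta xi < delta ->
        fiber B eta `<=` Unbhd eps (fiber B xi).

Definition bibony {R : realType} {d} {T : semiRingOfSetsType d}
    (S : set T) (mu : set T -> \bar R) (B : set (T * R)) : Prop :=
  exists B1 B2, [/\ B = B1 `|` B2, bony S mu B1 & bony S mu B2].

Definition cont_bibony {R : realType} {n : nat}
    (S : set (SN n)) (mu : set (SN n) -> \bar R) (B : set (SN n * R)) : Prop :=
  exists B1 B2, [/\ B = B1 `|` B2,
    bony S mu B1 /\ graph_continuous B1 &
    bony S mu B2 /\ graph_continuous B2].

From HB Require Import structures.
From mathcomp Require Import all_boot all_order all_algebra.
From mathcomp Require Import all_classical all_reals all_analysis.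
From mathcomp Require Import zify lra.
Import Order.TTheory GRing.Theory Num.Theory.
Local Open Scope classical_set_scope.
Local Open Scope ring_scope.
Set Implicit Arguments. Unset Strict Implicit. Unset Printing Implicit Defensive.

(* An admissible sequence w is determined by its projection pi(w) and by the
   half of the alphabet, {1..N} or {N+1..2N}, containing w_0: it stays in the
   same half after an orientation-preserving f_i and switches halves after an
   orientation-reversing one.  Hence pi has exactly two sections over Sigma_A,
   [lift_seq true] and [lift_seq false], exchanged by the flip i <-> i + N, and
   Pi(B) is the union of Pi(B ∩ C) and Pi(B \ C), whose fibres over eta are the
   fibre of B over [lift_seq true eta] and the image under R of the fibre over
   [lift_seq false eta].  A lambda-null set N pulls back along either section
   to a pi_*lambda-null set, since pi^-1 of that preimage lies in
   N ∪ flip^-1 N ∪ (Sigma_A)^c and the symmetric Markov measure is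
   flip-invariant (it agrees with its flip on cylinders).  Continuity survives
   because the k-th symbol of a lift only depends on the symbols at positions
   |j| <= |k|, so both sections are 1-Lipschitz for d. *)

Section Alphabet.
Variable N : nat.

Definition sym (b : bool) (j : 'I_N) : 'I_(N + N) :=
  if b then lshift N j else rshift N j.

Definition swap (i : 'I_(N + N)) : 'I_(N + N) := sym (~~ isLo i) (bar i).

Definition flip (w : int -> 'I_(N + N)) : int -> 'I_(N + N) := fun k => swap (w k).

Lemma isLo_sym b j : isLo (sym b j) = b.
Proof. by case: b; rewrite /isLo /= ?ltn_ord // ltnNge leq_addr. Qed.

Lemma bar_sym b j : bar (sym b j) = j.
Proof.
case: b; rewrite /bar /=.
- by rewrite -[lshift N j]/(unsplit (inl j)) unsplitK.
- by rewrite -[rshift N j]/(unsplit (inr j)) unsplitK.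
Qed.

Lemma sym_isLo_bar i : sym (isLo i) (bar i) = i.
Proof. by rewrite /isLo /bar; case: split_ordP => j ->. Qed.

Lemma swap_sym b j : swap (sym b j) = sym (~~ b) j.
Proof. by rewrite /swap isLo_sym bar_sym. Qed.

Lemma swapK : involutive swap.
Proof. by move=> i; rewrite -(sym_isLo_bar i) !swap_sym negbK. Qed.

End Alphabet.
Arguments swap {N}.
Arguments flip {N}.

Definition window_local {K K' : Type} (g : (int -> K) -> int -> K') :=
  forall x y k, (forall j, (`|j| <= `|k|)%N -> x j = y j) -> g x k = g y k.

Lemma pointwise_window_local {K K' : Type} (h : K -> K') :
  window_local (fun x k => h (x k)).
Proof. by move=> x y k xy; rewrite xy. Qed.

Lemma dseq_window_local {R : realType} {K K' : Type}
    (g : (int -> K) -> int -> K') x y :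
  window_local g -> dseq (g x) (g y) <= dseq x y :> R.
Proof.
move=> gloc; rewrite /dseq.
set Sg := [set r : R | _]; set S := [set r : R | _].
have half_ge0 : 0 <= 2^-1 :> R by rewrite invr_ge0.
have half_le1 : 2^-1 <= 1 :> R by rewrite invf_le1 //; lra.
have ubS : has_ubound S by exists 1 => _ [k [_ ->]]; exact: exprn_ile1.
have [Sg0|/nonemptyPn ->] := pselect (Sg !=set0); last first.
  rewrite sup0; have [[r Sr]|/nonemptyPn ->] := pselect (S !=set0); last by rewrite sup0.
  apply: le_trans (ub_le_sup ubS Sr); case: Sr => k [_ ->].
  exact: exprn_ge0.
apply: ge_sup => // _ [k [gxy ->]].
have [j [jk xy]] : exists j, (`|j| <= `|k|)%N /\ x j <> y j.
  apply: contrapT => all_eq; apply/gxy/gloc => j jk.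
  by apply: contrapT => xy; apply: all_eq; exists j.
apply: le_trans (ub_le_sup ubS _); last by exists j.
exact: ler_wiXn2l.
Qed.

Section Lift.
Variables (N : nat) (o : 'I_N -> bool).

Definition coherent (w : int -> 'I_(N + N)) :=
  forall k, isLo (w (k + 1)) = (isLo (w k) == o (bar (w k))).

Fixpoint sheet_pos (b : bool) (eta : int -> 'I_N) (m : nat) : bool :=
  if m is m'.+1 then sheet_pos b eta m' == o (eta (Posz m')) else b.

(* Going backwards uses the same recursion, as [== o (eta k)] is an involution
   of bool. *)
Fixpoint sheet_neg (b : bool) (eta : int -> 'I_N) (m : nat) : bool :=
  if m is m'.+1 then sheet_neg b eta m' == o (eta (Negz m))
  else b == o (eta (Negz 0)).

Definition sheet b eta (k : int) : bool :=
  match k with Posz m => sheet_pos b eta m | Negz m => sheet_neg b eta m end.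

Definition lift_seq b eta : int -> 'I_(N + N) := fun k => sym (sheet b eta k) (eta k).

Lemma sheetS b eta k : sheet b eta (k + 1) = (sheet b eta k == o (eta k)).
Proof.
have eqbK x y : ((x == y) == y) = x by case: x; case: y.
case: k => [m|[|m]] /=; first by rewrite addn1.
- by rewrite eqbK.
- by rewrite subn1 /= eqbK.
Qed.

Lemma eq_xnor_recursion (q a c : int -> bool) :
  (forall k, a (k + 1) = (a k == q k)) -> (forall k, c (k + 1) = (c k == q k)) ->
  a 0 = c 0 -> a =1 c.
Proof.
have back (x : int -> bool) k : (forall k, x (k + 1) = (x k == q k)) ->
  x k = (x (k + 1) == q k) by move=> xS; rewrite xS; case: (x k); case: (q k).
move=> aS cS ac0 [] m.
- elim: m => [|m ih] //; rewrite -addn1 PoszD aS cS ih //.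
- elim: m => [|m ih].
  + by rewrite (back a) // (back c) //; congr (_ == _).
  + rewrite (back a) // (back c) //; have -> : Negz m.+1 + 1 = Negz m by rewrite !NegzE; lia.
    by rewrite ih.
Qed.

Lemma isLo_lift_seq0 b eta : isLo (lift_seq b eta 0) = b.
Proof. by rewrite /lift_seq isLo_sym. Qed.

Lemma bar_lift_seq b eta : (fun k => bar (lift_seq b eta k)) = eta.
Proof. by apply: funext => k; exact: bar_sym. Qed.

Lemma coherent_lift_seq b eta : coherent (lift_seq b eta).
Proof. by move=> k; rewrite /lift_seq !isLo_sym bar_sym sheetS. Qed.

Lemma coherentE w : coherent w -> w = lift_seq (isLo (w 0)) (fun k => bar (w k)).
Proof.
move=> wcoh; apply: funext => k; rewrite /lift_seq.
have -> : sheet (isLo (w 0)) (fun k => bar (w k)) k = isLo (w k).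
  apply: (@eq_xnor_recursion (fun k => o (bar (w k))) (sheet _ _)
    (fun k => isLo (w k))) => // ?; exact: sheetS.
by rewrite sym_isLo_bar.
Qed.

Lemma lift_seq_negb b eta : lift_seq (~~ b) eta = flip (lift_seq b eta).
Proof.
apply: funext => k; rewrite /flip /lift_seq swap_sym.
congr sym; apply: (@eq_xnor_recursion (fun k => o (eta k)) (sheet _ _)
  (fun k => ~~ sheet b eta k)) => // k'.
- by rewrite sheetS.
- by rewrite sheetS; case: (sheet b eta k'); case: (o _).
Qed.

Lemma lift_seq_bar_coherent b w : coherent w ->
  lift_seq b (fun k => bar (w k)) = w \/ lift_seq b (fun k => bar (w k)) = flip w.
Proof.
move=> /coherentE w_lift; rewrite {2 4}w_lift.
have [<-|->] : b = isLo (w 0) \/ b = ~~ isLo (w 0) by case: b; case: (isLo _); auto.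
  by left.
by right; rewrite lift_seq_negb.
Qed.

Lemma lift_seq_window_local b : window_local (lift_seq b).
Proof.
move=> eta eta' k agree; rewrite /lift_seq agree //; congr sym.
case: k agree => m /= agree.
- elim: m agree => [|m ih] agree //=.
  by rewrite ih ?agree // => j jm; apply: agree; lia.
- elim: m agree => [|m ih] agree /=; first by rewrite agree.
  by rewrite ih ?agree // => j jm; apply: agree; lia.
Qed.

End Lift.

Section Orientation.
Variables (R : realType) (N : nat) (f : 'I_N -> R -> R).
Hypothesis hf : forall i, orient_pres (f i) \/ orient_rev (f i).

Definition is_pres (i : 'I_N) : bool := `[< orient_pres (f i) >].

Lemma orient_pres_not_rev (g : R -> R) : orient_pres g -> ~ orient_rev g.
Proof.
move=> gpres grev; have := gpres 0 1 (lexx _) ltr01 (lexx _).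
by rewrite ltNge le_eqVlt grev ?orbT ?lexx ?ltr01.
Qed.

Lemma admE i j : adm f i j <-> isLo j = (isLo i == is_pres (bar i)).
Proof.
rewrite /is_pres; case: (hf (bar i)) => [fpres|frev].
- have -> : `[< orient_pres (f (bar i)) >] by exact/asboolP.
  rewrite eqb_id; split.
  + case=> -[iLo g jLo]; move: iLo jLo; case: (isLo i); case: (isLo j) => // _ _;
    case: (orient_pres_not_rev fpres g).
  + by case iLo: (isLo i) => jLo; [apply: Or41 | apply: Or43]; split;
      rewrite ?iLo ?jLo.
- have -> : `[< orient_pres (f (bar i)) >] = false.
    by apply/asboolP => /orient_pres_not_rev.
  rewrite eqbF_neg; split.
  + case=> -[iLo g jLo]; move: iLo jLo; case: (isLo i); case: (isLo j) => // _ _;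
    case: (orient_pres_not_rev g frev).
  + by case iLo: (isLo i) => /= jLo; [apply: Or42 | apply: Or44]; split;
      rewrite ?iLo ?jLo.
Qed.

Lemma SigmaAE : SigmaA f = coherent is_pres.
Proof. by apply/seteqP; split => w wA k; apply/admE/wA. Qed.

End Orientation.

Section Window.
Context d (K : finType) (T : measurableType d) (coord : T -> int -> K).
Hypothesis measurable_coord : forall k i, measurable [set w | coord w k = i].

Definition window (m : nat) (w : T) : {ffun 'I_(m.*2).+1 -> K} :=
  [ffun j : 'I_(m.*2).+1 => coord w (- m%:Z + (j : nat)%:Z)].

Definition determined (m : nat) (E : set T) :=
  forall w w', (forall k, (`|k| <= m)%N -> coord w k = coord w' k) -> E w -> E w'.

Lemma window_coord m w w' :
  window m w = window m w' -> forall k, (`|k| <= m)%N -> coord w k = coord w' k.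
Proof.
move=> ww' k km; have km' : (absz (k + m%:Z)%R < (m.*2).+1)%N by rewrite -muln2; lia.
have := congr1 (fun s : {ffun _ -> K} => s (Ordinal km')) ww'; rewrite !ffunE /=.
by have -> : - m%:Z + (absz (k + m%:Z))%:Z = k by lia.
Qed.

Lemma measurable_window m s : measurable [set w | window m w = s].
Proof.
have -> : [set w | window m w = s] =
    \bigcap_(j in [set: 'I_(m.*2).+1]) [set w | coord w (- m%:Z + (j : nat)%:Z) = s j].
  apply/seteqP; split => w /=; first by move=> <- j _; rewrite ffunE.
  by move=> ws; apply/ffunP => j; rewrite ffunE; exact: ws.
by apply: fin_bigcap_measurable => // j _; exact: measurable_coord.
Qed.

Lemma determined_bigcup m E : determined m E ->
  E = \bigcup_(s in window m @` E) [set w | window m w = s].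
Proof.
move=> Edet; apply/seteqP; split => [w Ew|w [_ [w' Ew' <-] ww']].
- by exists (window m w) => //; exists w.
- by apply: Edet Ew' => k; apply: window_coord.
Qed.

Lemma determined_measurable m E : determined m E -> measurable E.
Proof.
move=> /determined_bigcup ->; apply: fin_bigcup_measurable => // s _.
exact: measurable_window.
Qed.

Lemma determinedI m m' E E' :
  determined m E -> determined m' E' -> determined (maxn m m') (E `&` E').
Proof.
move=> Edet E'det w w' ww' [Ew E'w]; split.
- by apply: Edet Ew => k km; apply: ww'; rewrite leq_max km.
- by apply: E'det E'w => k km; apply: ww'; rewrite leq_max km orbT.
Qed.

Lemma measure_determined (R : realType) (mu : {measure set T -> \bar R}) m E :
  determined m E ->
  mu E = (\sum_(s \in window m @` E) mu [set w | window m w = s])%E.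
Proof.
move=> /determined_bigcup {1}->; apply: measure_fin_bigcup.
- exact: finite_finset.
- by move=> s s' _ _ [w [<- <-]].
- by move=> s _; exact: measurable_window.
Qed.

Lemma measurable_local_coord (K' : Type) (g : T -> int -> K') :
  (forall x y k, (forall j, (`|j| <= `|k|)%N -> coord x j = coord y j) ->
    g x k = g y k) ->
  forall k i, measurable [set x | g x k = i].
Proof.
move=> gloc k i; apply: (@determined_measurable `|k|%N).
by move=> w w' ww' /= <-; apply/esym/gloc.
Qed.

End Window.

Section SequenceSpaces.
Variable n : nat.

Lemma measurable_SA_coord k i : measurable [set w : SA n | w k = i].
Proof. by apply: sub_sigma_algebra; exists k, i. Qed.

Lemma measurable_SN_coord k i : measurable [set w : SN n | w k = i].
Proof. by apply: sub_sigma_algebra; exists k, i. Qed.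

Lemma measurable_fun_SA d (T : measurableType d) (g : T -> SA n) :
  (forall k i, measurable [set x | g x k = i]) -> measurable_fun setT g.
Proof.
move=> gmeas; apply: (@measurability _ _ _ _ setT g (cylA n)) => //.
by move=> _ [_ [k [i ->]] <-]; rewrite setTI; exact: gmeas.
Qed.

Lemma measurable_fun_SN d (T : measurableType d) (g : T -> SN n) :
  (forall k i, measurable [set x | g x k = i]) -> measurable_fun setT g.
Proof.
move=> gmeas; apply: (@measurability _ _ _ _ setT g (cylN n)) => //.
by move=> _ [_ [k [i ->]] <-]; rewrite setTI; exact: gmeas.
Qed.

Lemma measurable_piA : measurable_fun setT (piA n).
Proof.
apply: measurable_fun_SN; apply: (measurable_local_coord measurable_SA_coord).
exact: pointwise_window_local.
Qed.

Lemma measurable_flip : measurable_fun setT (flip : SA n -> SA n).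
Proof.
apply: measurable_fun_SA; apply: (measurable_local_coord measurable_SA_coord).
exact: pointwise_window_local.
Qed.

Lemma measurable_lift_seq (o : 'I_n.+1 -> bool) b :
  measurable_fun setT (lift_seq o b : SN n -> SA n).
Proof.
apply: measurable_fun_SA; apply: (measurable_local_coord measurable_SN_coord).
exact: lift_seq_window_local.
Qed.

End SequenceSpaces.

Section SymmetricMarkov.
Variables (R : realType) (n : nat) (f : 'I_n.+1 -> R -> R).
Variables (p : 'I_(n.+1 + n.+1) -> R) (P : 'I_(n.+1 + n.+1) -> 'I_(n.+1 + n.+1) -> R).
Variable lam : probability (SA n) R.
Hypothesis hlam : symmetric_markov f p P lam.

Local Notation coordA := (fun w : SA n => w : int -> 'I_(n.+1 + n.+1)).
Local Notation cyl m s := [set w : SA n | window coordA m w = s].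

Lemma p_swap i : p (swap i) = p i.
Proof.
rewrite -(sym_isLo_bar i) swap_sym; have [_ /(_ (bar i) (bar i))[pLR _ _]] := hlam.
by case: (isLo i); rewrite /sym /= pLR.
Qed.

Lemma P_swap i j : P (swap i) (swap j) = P i j.
Proof.
rewrite -(sym_isLo_bar i) -(sym_isLo_bar j) !swap_sym.
have [_ /(_ (bar i) (bar j))[_ PLL PLR]] := hlam.
by case: (isLo i); case: (isLo j); rewrite /sym /= ?PLL ?PLR.
Qed.

Lemma mweight_swap k (s : 'I_k.+1 -> 'I_(n.+1 + n.+1)) :
  mweight p P (fun j => swap (s j)) = mweight p P s.
Proof.
by rewrite /mweight p_swap; congr (_ * _); apply: eq_bigr => j _; rewrite P_swap.
Qed.

Lemma lam_window m s : lam (cyl m s) = (mweight p P s)%:E.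
Proof.
have [[_ _ _ _ lam_cyl] _] := hlam; rewrite -(lam_cyl (- m%:Z)); congr (lam _).
apply/seteqP; split => w /=; first by move=> <- j; rewrite ffunE.
by move=> ws; apply/ffunP => j; rewrite ffunE ws.
Qed.

Lemma flip_window m s :
  flip @^-1` cyl m s = cyl m [ffun j => swap (s j)].
Proof.
apply/seteqP; split => w /= /ffunP ws; apply/ffunP => j; move: (ws j);
  rewrite !ffunE /flip.
- by move=> <-; rewrite swapK.
- by move=> ->; rewrite swapK.
Qed.

Lemma lam_flip_window m s : lam (flip @^-1` cyl m s) = lam (cyl m s).
Proof.
rewrite flip_window !lam_window -mweight_swap.
by do 2 f_equal; apply/funext => j; rewrite ffunE swapK.
Qed.

Lemma lam_flip (E : set (SA n)) : measurable E -> lam (flip @^-1` E) = lam E.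
Proof.
move=> mE; apply/esym; rewrite -[RHS]/(pushforward lam (flip : SA n -> SA n) E).
apply: (measure_unique [set E : set (SA n) | exists m, determined coordA m E] (fun=> setT)
  _ _ _ _ lam (pushforward lam (flip : SA n -> SA n))) => //.
- apply/seteqP; split.
  + apply: smallest_sub; first exact: smallest_sigma_algebra.
    move=> _ [k [i ->]]; apply: sub_sigma_algebra; exists `|k|%N.
    by move=> w w' ww' /= <-; apply/esym/ww'.
  + apply: smallest_sub; first exact: sigma_algebra_measurable.
    by move=> C [m]; apply: determined_measurable; exact: measurable_SA_coord.
- by move=> A B [m Adet] [m' Bdet]; exists (maxn m m'); exact: determinedI.
- by move=> _; exists 0%N.
- by apply/seteqP; split => // w _; exists 0%N.
- exact: measurable_flip.
- move=> mflip A [m Adet]; rewrite (measure_determined (@measurable_SA_coord n) lam Adet).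
  rewrite [RHS](measure_determined (@measurable_SA_coord n) _ Adet).
  apply: eq_fsbigr => s _.
  exact/esym/lam_flip_window.
- by move=> _; change (lam [set: SA n] < +oo)%E; rewrite probability_setT ltry.
Qed.
End SymmetricMarkov.

Section Negligible.
Variables (R : realType) (n : nat) (f : 'I_n.+1 -> R -> R).
Hypothesis hf : forall i, orient_pres (f i) \/ orient_rev (f i).
Variables (p : 'I_(n.+1 + n.+1) -> R) (P : 'I_(n.+1 + n.+1) -> 'I_(n.+1 + n.+1) -> R).
Variable lam : probability (SA n) R.
Hypothesis hlam : symmetric_markov f p P lam.

Lemma lam_transition k a b :
  lam ([set w : SA n | w k = a] `&` [set w | w (k + 1) = b]) = (p a * P a b)%:E.
Proof.
have [[_ _ _ _ lam_cyl] _] := hlam.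
rewrite (_ : _ `&` _ = cylinder k (fun j : 'I_2 => if j == ord0 then a else b)).
  by rewrite lam_cyl /mweight big_ord1.
apply/seteqP; split => [w [wa wb] j|w ws]; last first.
  by split; [have := ws ord0 | have := ws ord_max]; rewrite /= ?addr0.
by case: j => -[|[|//]] j1 /=; rewrite ?addr0.
Qed.

Lemma negligible_inadmissible k :
  lam.-negligible [set w : SA n | ~ adm f (w k) (w (k + 1))].
Proof.
have [[_ _ P0 _ _] _] := hlam.
pose D := [set ab : 'I_(n.+1 + n.+1) * 'I_(n.+1 + n.+1) | ~ adm f ab.1 ab.2].
pose C ab := [set w : SA n | w k = ab.1] `&` [set w | w (k + 1) = ab.2].
have mC ab : measurable (C ab) by apply: measurableI; exact: measurable_SA_coord.
exists (\bigcup_(ab in D) C ab); split.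
- by apply: fin_bigcup_measurable => // ab _; exact: mC.
- rewrite measure_fin_bigcup //.
  + apply: fsbig1 => -[a b] ab_inadm.
    by apply: eq_trans (lam_transition k a b) _; rewrite P0 ?mulr0.
  + exact: finite_finset.
  + by move=> [a b] [a' b'] _ _ [w [[/= <- <-] [/= <- <-]]].
- by move=> w w_inadm; exists (w k, w (k + 1)).
Qed.

Lemma negligible_notSigmaA : lam.-negligible (~` SigmaA f).
Proof.
apply: negligibleS (negligible_bigcup (fun m =>
  negligibleU (negligible_inadmissible (Posz m)) (negligible_inadmissible (Negz m)))).
by move=> w /existsNP[[] m w_inadm]; exists m => //; [left | right].
Qed.

Lemma negligible_lift_seq_preimage b (M : set (SA n)) : lam.-negligible M ->
  (pushforward lam (piA n)).-negligible (lift_seq (is_pres f) b @^-1` M).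
Proof.
move=> [M' [mM' lamM' MM']].
exists (lift_seq (is_pres f) b @^-1` M'); split; last by move=> eta /MM'.
  by rewrite -[_ @^-1` _]setTI; exact: measurable_lift_seq.
have flipM' : lam.-negligible (flip @^-1` M' : set (SA n)).
  exists (flip @^-1` M'); split => //; last by rewrite (lam_flip hlam).
  by rewrite -[_ @^-1` _]setTI; exact: measurable_flip.
rewrite /pushforward; apply: measure_negligible.
  rewrite -[_ @^-1` _]setTI; apply: measurable_piA => //.
  by rewrite -[_ @^-1` _]setTI; exact: measurable_lift_seq.
have M'neg : lam.-negligible M' by exists M'; split.
apply: negligibleS (negligibleU (negligibleU M'neg flipM')
  negligible_notSigmaA) => w /= lift_w.
have [wA|] := pselect (SigmaA f w); last by right.
rewrite SigmaAE // in wA; rewrite /piA /= in lift_w; left.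
by have [lift_w_eq|lift_w_eq] := lift_seq_bar_coherent b wA;
  rewrite lift_w_eq in lift_w; [left | right].
Qed.

End Negligible.

Section Mirror.
Variable R : realType.

Definition mirror (b : bool) (x : R) : R := if b then x else 1 - x.

Lemma mirrorK b : involutive (mirror b).
Proof. by case: b => x //=; rewrite opprB addrC subrK. Qed.

Lemma mirror_dist b x y : `|mirror b x - mirror b y| = `|x - y|.
Proof.
case: b => //=.
have -> : 1 - x - (1 - y) = y - x by lra.
exact: distrC.
Qed.

Lemma mirror_itv01 b x : 0 <= x <= 1 -> 0 <= mirror b x <= 1.
Proof. by case: b => //= /andP[x_ge0 x_le1]; apply/andP; split; lra. Qed.

Lemma is_interval_mirror b (S : set R) : is_interval S -> is_interval (mirror b @^-1` S).
Proof.
move=> S_itv x y Sx Sy z /andP[xz zy]; case: b Sx Sy => /= Sx Sy.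
  by apply: (S_itv x y) => //; apply/andP.
by apply: (S_itv (1 - y) (1 - x)) => //; apply/andP; split; lra.
Qed.

Lemma preimage_mirror1 b y : mirror b @^-1` [set y] = [set mirror b y].
Proof.
by apply/seteqP; split => x /= => [<-|->]; rewrite mirrorK.
Qed.

Lemma preimage_mirror_Unbhd b eps (S : set R) :
  mirror b @^-1` Unbhd eps S `<=` Unbhd eps (mirror b @^-1` S).
Proof.
move=> x [y Sy xy]; exists (mirror b y); first by rewrite /= mirrorK.
by rewrite -(mirror_dist b) mirrorK.
Qed.

End Mirror.

Lemma image_fstP {T U : Type} (S : set (T * U)) xi :
  (fst @` S) xi <-> exists x, fiber S xi x.
Proof. by split => [[[? x] Sx <-]|[x Sx]]; [exists x | exists (xi, x)]. Qed.

Section Projection.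
Variables (R : realType) (n : nat) (f : 'I_n.+1 -> R -> R).
Hypothesis hf : forall i, orient_pres (f i) \/ orient_rev (f i).
Variables (p : 'I_(n.+1 + n.+1) -> R) (P : 'I_(n.+1 + n.+1) -> 'I_(n.+1 + n.+1) -> R).
Variable lam : probability (SA n) R.
Hypothesis hlam : symmetric_markov f p P lam.
Variable B : set (SA n * R).
Hypothesis hB : bony (T := SA n) (SigmaA f) lam B.

Local Notation lift b := (lift_seq (is_pres f) b).

Definition sheet_image (b : bool) : set (SN n * R) :=
  PiMap (R := R) (n := n) @` [set z | B z /\ isLo (z.1 0) = b].

Lemma PiMap_image_sheets :
  PiMap (R := R) (n := n) @` B = sheet_image true `|` sheet_image false.
Proof.
apply/seteqP; split => [_ [z Bz <-]|_ [] [z [Bz _] <-]]; last 2 first.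
- by exists z.
- by exists z.
by case z_lo: (isLo (z.1 0)); [left | right]; exists z.
Qed.

Lemma fiber_sheet_image b eta :
  fiber (sheet_image b) eta = mirror b @^-1` fiber B (lift b eta).
Proof.
have [Bsub _ _] := hB; apply/seteqP; split => [x [[w y] [Bwy <-] [<- <-]]|x Bx].
- have := (Bsub _ Bwy).1; rewrite SigmaAE // => /coherentE w_lift.
  by rewrite /fiber /= mirrorK -w_lift.
- exists (lift b eta, mirror b x); first by split => //; rewrite isLo_lift_seq0.
  rewrite /PiMap /= isLo_lift_seq0; congr pair; [exact: bar_lift_seq | exact: mirrorK].
Qed.

Lemma bony_sheet_image b : bony setT (pushforward lam (piA n)) (sheet_image b).
Proof.
have [Bsub Bae Bitv] := hB.
have lift_A eta : SigmaA f (lift b eta) by rewrite SigmaAE //; exact: coherent_lift_seq.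
split.
- by move=> _ [[w y] [Bwy _] <-]; split => //; exact/mirror_itv01/(Bsub _ Bwy).2.
- (* viewing the pushforward as a measure needs the measurability of [piA n] *)
  apply: negligibleS (negligible_lift_seq_preimage hf hlam b Bae).
    exact: measurable_piA.
  move=> eta /= eta_bad lift_good; apply: eta_bad => _.
  have [y By] := lift_good (lift_A eta).
  by exists (mirror b y); rewrite fiber_sheet_image By preimage_mirror1.
- move=> eta _; rewrite fiber_sheet_image; apply: is_interval_mirror.
  exact: Bitv (lift_A eta).
Qed.

Lemma graph_continuous_sheet_image b :
  graph_continuous B -> graph_continuous (sheet_image b).
Proof.
move=> Bcont eta eta_dom eps eps_gt0.
have lift_dom eta' : (fst @` sheet_image b) eta' -> (fst @` B) (lift b eta').
  move=> /image_fstP[x]; rewrite fiber_sheet_image => Bx.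
  by apply/image_fstP; exists (mirror b x).
have [delta delta_gt0 Bnear] := Bcont _ (lift_dom _ eta_dom) _ eps_gt0.
exists delta => // eta' eta'_dom d_lt.
rewrite !fiber_sheet_image => x Bx; apply: preimage_mirror_Unbhd.
apply: Bnear Bx; first exact: lift_dom.
exact: le_lt_trans (dseq_window_local _ _ (lift_seq_window_local _ b)) d_lt.
Qed.

End Projection.

Theorem lemma3p15 (R : realType) (n : nat) (f : 'I_n.+1 -> R -> R)
  (hf : forall i, orient_pres (f i) \/ orient_rev (f i))
  (p : 'I_(n.+1 + n.+1) -> R)
  (P : 'I_(n.+1 + n.+1) -> 'I_(n.+1 + n.+1) -> R)
  (lam : probability (SA n) R)
  (hlam : symmetric_markov f p P lam)
  (B : set (SA n * R))
  (hB : bony (T := SA n) (SigmaA f) lam B) :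
  bibony [set: SN n] (pushforward lam (piA n)) (PiMap (R:=R) (n:=n) @` B) /\
  (graph_continuous B ->
   cont_bibony [set: SN n] (pushforward lam (piA n)) (PiMap (R:=R) (n:=n) @` B)).
Proof.
have bony_sheet b := bony_sheet_image hf hlam hB b.
split; first by exists (sheet_image B true), (sheet_image B false); rewrite PiMap_image_sheets.
move=> Bcont; exists (sheet_image B true), (sheet_image B false).
rewrite PiMap_image_sheets; split => //; split => //.
all: exact (graph_continuous_sheet_image hf hB Bcont).
Qed.
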